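(* Let $x$ be fixed, let $\pi_{\pm|x}\ge0$ with $\pi_{+|x}+\pi_{-|x}=1$, and let $\rho_{\pm|x}=|\psi_{\pm|x}\rangle\langle\psi_{\pm|x}|=\tfrac12(I+\mathbf s_{\pm|x}\cdot\boldsymbol\sigma)$ be pure qubit states. Define the fidelity-based discriminability of the ensemble $\{(\pi_{+|x},\rho_{+|x}),(\pi_{-|x},\rho_{-|x})\}$ by $$D_x=\eta_1^2+\eta_2^2+2\eta_1\eta_2\sqrt{1-|\gamma|^2}+|\gamma|^2(\eta_1\eta_2-\eta_{\min}^2),$$ where $\eta_1=\pi_{+|x}$, $\eta_2=\pi_{-|x}$, $\eta_{\min}=\min\{\eta_1,\eta_2\}$ and $\gamma=\langle\psi_{+|x}|\psi_{-|x}\rangle$. With the SWAP-test pass probability $p(\mathsf{pass}|\rho,\sigma)=\tfrac12(1+\mathrm{Tr}(\rho\sigma))$, let $p_{\mathrm{pur}}^{\pm|x}=p(\mathsf{pass}|\rho_{\pm|x},\rho_{\pm|x})$, $p_{\mathrm{ov}}^{x}=p(\mathsf{pass}|\rho_{+|x},\rho_{-|x})$, and let $\widetilde R_x\ge0$ be given by $$\widetilde R_x^2=2\Big[\pi_{+|x}^2(2p_{\mathrm{pur}}^{+|x}-1)+\pi_{-|x}^2(2p_{\mathrm{pur}}^{-|x}-1)-2\pi_{+|x}\pi_{-|x}(2p_{\mathrm{ov}}^{x}-1)\Big]-(\pi_{+|x}-\pi_{-|x})^2 .$$ Then $\widetilde R_x\le 2D_x-1$.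
   Context: $\boldsymbol\sigma$ denotes the vector of Pauli matrices. In the paper, $\pi_{a|x}=p(a|x)$ are Alice's outcome probabilities and $\rho_{a|x}$ Bob's conditional preparations in a Bell experiment. *)

From HB Require Import structures.
From mathcomp Require Import all_boot all_order all_algebra.
From mathcomp Require Import complex.
Set Implicit Arguments. Unset Strict Implicit. Unset Printing Implicit Defensive.
Import Order.TTheory GRing.Theory Num.Theory.
Local Open Scope ring_scope.

Definition adjmx (R : rcfType) m n (A : 'M[R[i]]_(m, n)) : 'M[R[i]]_(n, m) :=
  (map_mx (@conjc R) A)^T.

Definition braket (R : rcfType) n (psi phi : 'cV[R[i]]_n) : R[i] :=
  (adjmx psi *m phi) 0 0.

Definition unit_ket (R : rcfType) n (psi : 'cV[R[i]]_n) : Prop :=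
  braket psi psi = 1.

Definition ketbra (R : rcfType) n (psi : 'cV[R[i]]_n) : 'M[R[i]]_n :=
  psi *m adjmx psi.

Definition p_pass (R : rcfType) n (rho sigma : 'M[R[i]]_n) : R[i] :=
  (1 + \tr (rho *m sigma)) / 2.

Definition cabs (R : rcfType) (z : R[i]) : R := Normc.normc z.

Definition discrim (R : rcfType) (eta1 eta2 : R) (gamma : R[i]) : R :=
  let etamin := Num.min eta1 eta2 in
  eta1 ^+ 2 + eta2 ^+ 2 + 2 * eta1 * eta2 * Num.sqrt (1 - cabs gamma ^+ 2)
  + cabs gamma ^+ 2 * (eta1 * eta2 - etamin ^+ 2).

From HB Require Import structures.
From mathcomp Require Import all_boot all_order all_algebra.
From mathcomp Require Import complex ring lra.
Import Order.TTheory GRing.Theory Num.Theory.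
Local Open Scope ring_scope.
Local Open Scope complex_scope.

(** Both purities are 1 and 2 p_ov - 1 = Tr(rho_+ rho_-) = |gamma|^2, so the
    hypothesis says Rt^2 = 1 - 4 eta1 eta2 |gamma|^2, with |gamma| <= 1 by
    Cauchy-Schwarz.  As D_x is symmetric we may take eta1 <= eta2; then with
    s = sqrt(1 - |gamma|^2) and q = 2 eta1 (eta2 - eta1) >= 0 the right-hand
    side r = 2 D_x - 1 is a sum of nonnegative terms and
    r^2 - Rt^2 = (1 - s) s q (4 eta2 + 4 eta1 s + q s (1 - s)) >= 0. *)

Lemma discrim_bound_sorted (R : realFieldType) (a b s Rt : R) :
  0 <= a -> a <= b -> a + b = 1 -> 0 <= s <= 1 -> 0 <= Rt ->
  Rt ^+ 2 = 1 - 4 * a * b * (1 - s ^+ 2) ->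
  Rt <= 2 * (a ^+ 2 + b ^+ 2 + 2 * a * b * s + (1 - s ^+ 2) * (a * b - a ^+ 2)) - 1.
Proof.
move=> a_ge0 le_ab sum_ab /andP[s_ge0 s_le1] Rt_ge0 def_Rt.
have def_b : b = 1 - a by lra.
subst b.
set r := (X in _ <= X); set q := 2 * a * (1 - a - a).
have q_ge0 : 0 <= q by rewrite !mulr_ge0 // subr_ge0.
have def_r : r = (1 - a - a) ^+ 2 + 4 * a * (1 - a) * s + (1 - s ^+ 2) * q.
  by rewrite /r /q; ring.
have r_ge0 : 0 <= r.
  rewrite def_r !addr_ge0 ?sqr_ge0 ?mulr_ge0 //; nra.
have sqr_gap : r ^+ 2 - Rt ^+ 2
    = (1 - s) * s * q * (4 * (1 - a) + 4 * a * s + q * s * (1 - s)).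
  by rewrite def_r def_Rt /q; ring.
rewrite -(ler_pXn2r (isT : (0 < 2)%N)) ?nnegrE // -subr_ge0 sqr_gap.
by do ![apply: mulr_ge0 | lra | apply: addr_ge0].
Qed.

Lemma discrimC (R : rcfType) (eta1 eta2 : R) (gamma : R[i]) :
  discrim eta1 eta2 gamma = discrim eta2 eta1 gamma.
Proof. by rewrite /discrim minC; ring. Qed.

Lemma normc_cabs (R : rcfType) (z : R[i]) : `|z| = (cabs z)%:C.
Proof. by []. Qed.

Lemma cabs_ge0 {R : rcfType} (z : R[i]) : 0 <= cabs z.
Proof. by rewrite -lecR -normc_cabs normr_ge0. Qed.

Lemma discrim_bound (R : rcfType) (eta1 eta2 Rt : R) (gamma : R[i]) :
  0 <= eta1 -> 0 <= eta2 -> eta1 + eta2 = 1 -> cabs gamma <= 1 -> 0 <= Rt ->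
  Rt ^+ 2 = 1 - 4 * eta1 * eta2 * cabs gamma ^+ 2 ->
  Rt <= 2 * discrim eta1 eta2 gamma - 1.
Proof.
wlog le_eta : eta1 eta2 / eta1 <= eta2 => [symmetric|].
  move=> ge0_1 ge0_2 sum_eta c_le1 Rt_ge0 def_Rt.
  have [le12 | /ltW le21] := leP eta1 eta2; first exact: symmetric.
  rewrite discrimC; apply: symmetric => //; first by rewrite addrC.
  by rewrite def_Rt; ring.
move=> ge0_1 _ sum_eta c_le1 Rt_ge0 def_Rt.
have c_ge0 := cabs_ge0 gamma.
rewrite /discrim (min_idPl le_eta).
set s := Num.sqrt _.
have sqr_s : s ^+ 2 = 1 - cabs gamma ^+ 2 by rewrite sqr_sqrtr // subr_ge0 expr_le1.
have def_c2 : cabs gamma ^+ 2 = 1 - s ^+ 2 by rewrite sqr_s; ring.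
have s_range : 0 <= s <= 1.
  rewrite sqrtr_ge0 /= -(expr_le1 (isT : (0 < 2)%N)) ?sqrtr_ge0 //.
  by rewrite sqr_s lerBlDr lerDl sqr_ge0.
rewrite def_c2 in def_Rt *.
exact: discrim_bound_sorted.
Qed.

Section Braket.
Variables (R : rcfType) (n : nat).
Implicit Types (psi phi chi : 'cV[R[i]]_n) (c : R[i]).

Lemma braketE psi phi : braket psi phi = \sum_i (psi i 0)^* * phi i 0.
Proof. by rewrite /braket /adjmx !mxE; apply: eq_bigr => i _; rewrite !mxE. Qed.

Lemma braketC psi phi : braket phi psi = (braket psi phi)^*.
Proof.
rewrite !braketE rmorph_sum; apply: eq_bigr => i _.
by rewrite rmorphM /= conjcK mulrC.
Qed.

Lemma braket_ge0 psi : 0 <= braket psi psi.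
Proof. by rewrite braketE sumr_ge0 // => i _; rewrite mulrC mulcJ_ge0. Qed.

Lemma braketBZl chi psi phi c :
  braket (chi - c *: psi) phi = braket chi phi - c^* * braket psi phi.
Proof.
rewrite !braketE mulr_sumr -sumrB; apply: eq_bigr => i _.
by rewrite !mxE rmorphB rmorphM; ring.
Qed.

Lemma braketBZr psi chi phi c :
  braket psi (chi - c *: phi) = braket psi chi - c * braket psi phi.
Proof. by rewrite braketC braketBZl rmorphB rmorphM /= conjcK -!braketC. Qed.

(* Cauchy-Schwarz: expand 0 <= <chi|chi> for chi = phi - <psi|phi> psi. *)
Lemma normr_braket_le1 psi phi :
  unit_ket psi -> unit_ket phi -> `|braket psi phi| <= 1.
Proof.
rewrite /unit_ket => psi1 phi1.
have := braket_ge0 (phi - braket psi phi *: psi).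
rewrite braketBZl !braketBZr psi1 phi1 mulr1 subrr mulr0 subr0.
rewrite [braket phi psi]braketC -sqr_normc.
by rewrite subr_ge0 expr_le1.
Qed.

Lemma mxtrace_ketbraM psi phi :
  \tr (ketbra psi *m ketbra phi) = `|braket psi phi| ^+ 2.
Proof.
rewrite /ketbra mulmxA mxtrace_mulC !mulmxA /mxtrace big_ord1.
by rewrite -mulmxA mxE big_ord1 sqr_normc -braketC mulrC.
Qed.

End Braket.

Theorem lemma2 (R : rcfType) (pip pim : R) (psip psim : 'cV[R[i]]_2) (Rt : R) :
  0 <= pip -> 0 <= pim -> pip + pim = 1 ->
  unit_ket psip -> unit_ket psim ->
  0 <= Rt ->
  (Rt ^+ 2)%:C =
    2%:R * (pip%:C ^+ 2 * (2%:R * p_pass (ketbra psip) (ketbra psip) - 1)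
          + pim%:C ^+ 2 * (2%:R * p_pass (ketbra psim) (ketbra psim) - 1)
          - 2%:R * pip%:C * pim%:C
              * (2%:R * p_pass (ketbra psip) (ketbra psim) - 1))
    - (pip%:C - pim%:C) ^+ 2 ->
  Rt <= 2 * discrim pip pim (braket psip psim) - 1.
Proof.
move=> pip_ge0 pim_ge0 sum_pi psip1 psim1 Rt_ge0 def_Rt.
apply: discrim_bound => //.
  by rewrite -lecR -normc_cabs normr_braket_le1.
apply: complexI; rewrite def_Rt /p_pass !mxtrace_ketbraM psip1 psim1 normr1.
have -> : pim = 1 - pip by lra.
by rewrite normc_cabs; field.
Qed.
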